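(* Fix an integer $\alpha\ge2$, an integer $\Delta\ge3$, and parameters $\beta_\mu>\beta_\nu\ge\frac{\Delta-2}{\Delta}$ with $\beta:=(\beta_\nu/\beta_\mu)^\alpha\beta_\mu<\frac{\Delta-2}{\Delta}$. There is a constant $C=C(\Delta,\alpha,\beta_\nu,\beta_\mu)>0$ such that for every $\Delta$-regular graph $G$, letting $\nu$ and $\mu$ be the Gibbs distributions of $(G,\beta_\nu)$ and $(G,\beta_\mu)$ respectively, $$\frac1C\,Z(G,\beta)\ \le\ D_{\chi^\alpha}(\nu\|\mu)\cdot\frac{Z(G,\beta_\nu)^\alpha}{Z(G,\beta_\mu)^{\alpha-1}}\ \le\ C\,Z(G,\beta).$$
   Context: For a graph $G=(V,E)$ and $\gamma>0$, the Ising model $(G,\gamma)$ has Gibbs distribution on $\{-1,+1\}^V$ given by $\pi(\sigma)=\gamma^{m(\sigma)}/Z(G,\gamma)$, where $m(\sigma)=|\{\{u,v\}\in E:\sigma_u=\sigma_v\}|$ and $Z(G,\gamma)=\sum_{\sigma\in\{-1,+1\}^V}\gamma^{m(\sigma)}$ is its partition function. The $\chi^\alpha$-divergence is $D_{\chi^\alpha}(\nu\|\mu)=\sum_\sigma\mu(\sigma)\cdot\frac12\left|\frac{\nu(\sigma)}{\mu(\sigma)}-1\right|^\alpha$. *)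

From mathcomp Require Import all_boot all_order all_algebra.
Set Implicit Arguments. Unset Strict Implicit. Unset Printing Implicit Defensive.
Import Order.TTheory GRing.Theory Num.Theory.
Local Open Scope ring_scope.

(* A finite simple graph is a symmetric irreflexive relation e on a finType T.
   Spin configurations sigma : {ffun T -> bool} (true = +1, false = -1). *)

Definition simple_graph (T : finType) (e : rel T) : Prop :=
  symmetric e /\ irreflexive e.

Definition regular (T : finType) (e : rel T) (D : nat) : Prop :=
  forall v : T, #|[pred u | e v u]| = D.

(* m(sigma): number of (unordered) edges {u,v} with sigma_u = sigma_v;
   computed as the number of ordered such pairs divided by 2. *)
Definition mono (T : finType) (e : rel T) (s : {ffun T -> bool}) : nat :=
  (#|[pred p : T * T | e p.1 p.2 && (s p.1 == s p.2)]| %/ 2)%N.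

Definition Zpart (R : realFieldType) (T : finType) (e : rel T) (g : R) : R :=
  \sum_(s : {ffun T -> bool}) g ^+ mono e s.

Definition gibbs (R : realFieldType) (T : finType) (e : rel T) (g : R)
  (s : {ffun T -> bool}) : R :=
  g ^+ mono e s / Zpart e g.

Definition chi_div (R : realFieldType) (T : finType) (a : nat)
  (nu mu : {ffun T -> bool} -> R) : R :=
  \sum_(s : {ffun T -> bool}) mu s * (2^-1 * `|nu s / mu s - 1| ^+ a).

(* Write r = bnu / bmu, w(s) = bmu ^ m(s) and q = Z(bnu) / Z(bmu) = (sum w r^m) / (sum w).
   Clearing denominators, X = 1/2 sum_s w(s) |r^m(s) - q|^alpha, while
   Z(b) = sum_s w(s) (r^m(s))^alpha.  The bound X <= Z(b) follows from
   |y - q|^alpha <= y^alpha + q^alpha and Jensen's inequality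
   q^alpha sum w <= sum w (r^m)^alpha.
   Conversely, flipping the spin of a vertex whose neighbours are not split evenly
   changes m by between 1 and Delta, so r^m and r^m' differ by a factor at least 1/r
   and one of them is at distance at least (1 - r) r^m / 2 from q, while w changes by
   a bounded factor.  Averaging this over the unbalanced vertices of each
   configuration, whose number changes by at most a factor Delta + 2 under such a flip,
   and disposing of configurations without unbalanced vertex by one extra flip, gives
   Z(b) <= C X with C independent of the graph. *)

From mathcomp Require Import all_boot all_order all_algebra.
From mathcomp Require Import reals.
From mathcomp Require Import zify ring lra.
Import Order.TTheory GRing.Theory Num.Theory.
Set Implicit Arguments. Unset Strict Implicit. Unset Printing Implicit Defensive.

Section SpinFlip.
Variables (T : finType) (e : rel T).
Hypotheses (e_sym : symmetric e) (e_irr : irreflexive e).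

Definition flip (s : {ffun T -> bool}) (v : T) : {ffun T -> bool} :=
  [ffun x => if x == v then ~~ s x else s x].

Lemma flipK v : involutive (flip ^~ v).
Proof. by move=> s; apply/ffunP => x; rewrite !ffunE; case: eqP => // ->; rewrite negbK. Qed.

Definition nagree (s : {ffun T -> bool}) v := \sum_u (e v u && (s u == s v) : nat).
Definition ndisagree (s : {ffun T -> bool}) v := \sum_u (e v u && (s u != s v) : nat).

Definition unbalanced s v := nagree s v != ndisagree s v.
Definition nunbalanced s := \sum_v (unbalanced s v : nat).

Lemma sum_neighbours D v : regular e D -> \sum_u (e v u : nat) = D.
Proof.
by move=> e_reg; rewrite -(e_reg v) -sum1_card [RHS]big_mkcond; apply: eq_bigr => u _; rewrite inE.
Qed.

Lemma nagreeD D s v : regular e D -> nagree s v + ndisagree s v = D.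
Proof.
move=> e_reg; rewrite -(sum_neighbours v e_reg) -big_split /=.
by apply: eq_bigr => u _; case: (e v u); case: (s u == s v).
Qed.

Lemma nagree_flip s v : nagree (flip s v) v = ndisagree s v.
Proof.
apply: eq_bigr => u _; rewrite !ffunE eqxx.
by case: (u =P v) => [->|_]; [rewrite e_irr | case: (s v); case: (s u)].
Qed.

Lemma ndisagree_flip s v : ndisagree (flip s v) v = nagree s v.
Proof.
apply: eq_bigr => u _; rewrite !ffunE eqxx.
by case: (u =P v) => [->|_]; [rewrite e_irr | case: (s v); case: (s u)].
Qed.

Lemma unbalanced_flip s v : unbalanced (flip s v) v = unbalanced s v.
Proof. by rewrite /unbalanced nagree_flip ndisagree_flip eq_sym. Qed.

(* Stated additively to avoid truncated subtraction, like [mono_flip] below. *)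
Lemma nagree_flip_neighbour s v u : e u v ->
  nagree (flip s v) u + (s v == s u) = nagree s u + (s v != s u).
Proof.
move=> e_uv; have /negbTE u_v : u != v by apply: contraTneq e_uv => ->; rewrite e_irr.
rewrite /nagree (bigD1 v) //= [in RHS](bigD1 v) //= !ffunE eqxx e_uv /=.
rewrite eq_sym u_v (eq_bigr (fun i => (e u i && (s i == s u) : nat))); last first.
  by move=> i /negbTE i_v; rewrite !ffunE i_v.
by case: (s v); case: (s u) => /=; lia.
Qed.

Lemma unbalanced_flip_far s v w : w != v -> ~~ e v w ->
  unbalanced (flip s v) w = unbalanced s w.
Proof.
move=> /negbTE w_v /negbTE vw; congr (_ != _); apply: eq_bigr => u _;
  rewrite !ffunE w_v; case: (u =P v) => [->|] //; by rewrite e_sym vw.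
Qed.

Lemma nunbalanced_flip D s v : regular e D ->
  (nunbalanced s <= nunbalanced (flip s v) + D.+1)%N.
Proof.
move=> e_reg.
have -> : D.+1 = (\sum_w (w == v : nat) + \sum_w (e v w : nat))%N.
  by rewrite (sum_neighbours v e_reg) (bigD1 v) //= eqxx big1 // => w /negbTE ->.
rewrite /nunbalanced -!big_split /=; apply: leq_sum => w _.
case: (w =P v) => [|/eqP w_v]; first by lia.
case e_vw: (e v w); first by lia.
by rewrite unbalanced_flip_far ?e_vw //; lia.
Qed.

Lemma nunbalanced_gt0 s v : unbalanced s v -> (0 < nunbalanced s)%N.
Proof. by move=> unb_v; rewrite /nunbalanced (bigD1 v) //= unb_v. Qed.

Lemma nunbalanced_eq0 s v : nunbalanced s = 0%N -> ~~ unbalanced s v.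
Proof. by move=> s0; apply: contra_eqN s0 => /nunbalanced_gt0; rewrite lt0n. Qed.

Lemma nunbalanced_flip_gt0 D s v : regular e D -> (0 < D)%N ->
  nunbalanced s = 0%N -> (0 < nunbalanced (flip s v))%N.
Proof.
move=> e_reg D_gt0 s0.
have /card_gt0P [u] : (0 < #|[pred u | e v u]|)%N by rewrite e_reg.
rewrite inE => e_vu; apply: (@nunbalanced_gt0 _ u).
have := nunbalanced_eq0 u s0; rewrite /unbalanced negbK => /eqP bal_u.
have := nagreeD s u e_reg; have := nagreeD (flip s v) u e_reg.
have := nagree_flip_neighbour s (etrans (e_sym u v) e_vu).
by case: (s v); case: (s u) => /=; lia.
Qed.

Let agree_pair (s : {ffun T -> bool}) x y : nat := e x y && (s x == s y).

Lemma mono_agree_pair s : mono e s = (\sum_x \sum_y agree_pair s x y) %/ 2.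
Proof.
rewrite /mono -sum1_card pair_big_dep /= big_mkcond.
by congr (_ %/ 2); apply: eq_bigr => -[x y] _; rewrite inE.
Qed.

Lemma sum_pairs_at (G : T -> T -> nat) v :
  \sum_x \sum_y ((x == v) + (y == v)) * G x y = \sum_y G v y + \sum_x G x v.
Proof.
rewrite (eq_bigr (fun x => \sum_y (x == v) * G x y + \sum_y (y == v) * G x y));
  last by move=> x _; rewrite -big_split; apply: eq_bigr => y _; rewrite mulnDl.
rewrite big_split /= (bigD1 v) //= [X in _ + X + _]big1 => [|x /negbTE x_v]; last first.
  by apply: big1 => y _; rewrite x_v.
rewrite addn0; congr (_ + _); first by apply: eq_bigr => y _; rewrite eqxx mul1n.
apply: eq_bigr => x _; rewrite (bigD1 v) //= eqxx mul1n big1 ?addn0 // => y /negbTE -> //.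
Qed.

(* Pairs not through [v] keep their agreement; those through [v] are counted with
   the weight [(x == v) + (y == v)] of [sum_pairs_at]. *)
Lemma mono_flip s v : mono e (flip s v) + nagree s v = mono e s + ndisagree s v.
Proof.
have pairs_at_v s' :
    \sum_y agree_pair s' v y + \sum_x agree_pair s' x v = nagree s' v + nagree s' v.
  by congr (_ + _); apply: eq_bigr => y _; rewrite /agree_pair 1?e_sym eq_sym.
have weighted s' : \sum_x \sum_y ((x == v) + (y == v)) * agree_pair s' x y =
    nagree s' v + nagree s' v by rewrite sum_pairs_at pairs_at_v.
have pointwise x y : agree_pair (flip s v) x y + ((x == v) + (y == v)) * agree_pair s x y =
    agree_pair s x y + ((x == v) + (y == v)) * agree_pair (flip s v) x y.
  rewrite /agree_pair !ffunE.
  by case: (x =P v) => [->|]; case: (y =P v) => [->|] /=; rewrite ?e_irr //=; lia.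
have total : \sum_x \sum_y agree_pair (flip s v) x y + (nagree s v + nagree s v) =
    \sum_x \sum_y agree_pair s x y + (ndisagree s v + ndisagree s v).
  rewrite -weighted -nagree_flip -weighted -!big_split /=.
  by apply: eq_bigr => x _; rewrite -!big_split; apply: eq_bigr => y _; apply: pointwise.
have halfD n k : ((n + (k + k)) %/ 2 = n %/ 2 + k)%N.
  by rewrite addnn -mul2n mulnC addnC divnMDl // addnC.
by rewrite !mono_agree_pair -!halfD total.
Qed.

Lemma mono_flip_unbalanced D s v : regular e D -> unbalanced s v ->
  [/\ mono e (flip s v) != mono e s, (mono e (flip s v) <= mono e s + D)%N
    & (mono e s <= mono e (flip s v) + D)%N].
Proof.
move=> e_reg; have := mono_flip s v; have := nagreeD s v e_reg; rewrite /unbalanced.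
by move=> ? ? ?; split; lia.
Qed.

Lemma mono_flip_balanced s v : ~~ unbalanced s v -> mono e (flip s v) = mono e s.
Proof. by have := mono_flip s v; rewrite /unbalanced negbK => ? /eqP; lia. Qed.

End SpinFlip.

Local Open Scope ring_scope.

Section FlipAveraging.
Variables (R : realFieldType) (T : finType) (e : rel T) (D : nat).
Hypotheses (e_sym : symmetric e) (e_irr : irreflexive e).
Hypotheses (e_reg : regular e D) (D_gt0 : (0 < D)%N).
Variables (K : R) (f : nat -> R) (g : {ffun T -> bool} -> R).
Hypotheses (K_ge0 : 0 <= K) (f_ge0 : forall k, 0 <= f k) (g_ge0 : forall s, 0 <= g s).
Hypothesis f_le_flip :
  forall s v, unbalanced e s v -> f (mono e s) <= K * (g s + g (flip s v)).

(* Averaging over all unbalanced vertices, instead of choosing one, keeps the constant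
   independent of the graph: undoing the flip costs only the factor [D.+2] of
   [inv_nunbalanced_flip]. *)
Let flip_average s :=
  (nunbalanced e s)%:R^-1 * \sum_(v | unbalanced e s v) g (flip s v).

Lemma nunbalancedE s : \sum_(v | unbalanced e s v) (1 : R) = (nunbalanced e s)%:R.
Proof. by rewrite natr_sum big_mkcond; apply: eq_bigr => v _; case: unbalanced. Qed.

Lemma flip_average_ge0 s : 0 <= flip_average s.
Proof. by rewrite mulr_ge0 ?invr_ge0 ?ler0n ?sumr_ge0. Qed.

Lemma f_le_flip_average s : (0 < nunbalanced e s)%N ->
  f (mono e s) <= K * g s + K * flip_average s.
Proof.
set n : R := (nunbalanced e s)%:R => s_unb; have n_gt0 : 0 < n by rewrite ltr0n.
have scaled : n * f (mono e s) <=
    n * (K * g s) + K * \sum_(v | unbalanced e s v) g (flip s v).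
  rewrite -[n]nunbalancedE !mulr_suml mulr_sumr -big_split; apply: ler_sum => v unb_v /=.
  by rewrite !mul1r -mulrDr; apply: f_le_flip.
by rewrite /flip_average -/n -(ler_pM2l n_gt0) mulrDr [n * (K * (_ * _))]mulrCA mulVKf ?gt_eqF.
Qed.

Lemma inv_nunbalanced_flip s v : unbalanced e s v ->
  (nunbalanced e (flip s v))%:R^-1 <= (D.+2)%:R / (nunbalanced e s)%:R :> R.
Proof.
move=> unb_v.
have n_gt0 := nunbalanced_gt0 unb_v.
have n'_gt0 : (0 < nunbalanced e (flip s v))%N.
  by apply: (@nunbalanced_gt0 _ _ _ v); rewrite unbalanced_flip.
have := nunbalanced_flip e_sym s v e_reg.
rewrite ler_pdivlMr ?ltr0n // mulrC ler_pdivrMr ?ltr0n // -natrM ler_nat; nia.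
Qed.

Lemma sum_flip_average_le : \sum_s flip_average s <= (D.+2)%:R * \sum_s g s.
Proof.
set c : R := (D.+2)%:R.
have reindexed v : \sum_(s | unbalanced e s v) (nunbalanced e s)%:R^-1 * g (flip s v) =
    \sum_(s | unbalanced e s v) (nunbalanced e (flip s v))%:R^-1 * g s.
  rewrite (reindex_inj (inv_inj (flipK v))) /=.
  by apply: eq_big => s; rewrite unbalanced_flip // flipK.
have bounded v : \sum_(s | unbalanced e s v) (nunbalanced e (flip s v))%:R^-1 * g s <=
    \sum_(s | unbalanced e s v) c / (nunbalanced e s)%:R * g s.
  by apply: ler_sum => s unb_v; rewrite ler_wpM2r ?inv_nunbalanced_flip.
rewrite /flip_average; under eq_bigr do rewrite mulr_sumr.
rewrite (exchange_big_dep xpredT) //=; under eq_bigr do rewrite reindexed.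
apply: (le_trans (ler_sum _ (fun v _ => bounded v))).
rewrite (exchange_big_dep xpredT) //= mulr_sumr; apply: ler_sum => s _.
have -> : \sum_(v | unbalanced e s v) c / (nunbalanced e s)%:R * g s =
    c / (nunbalanced e s)%:R * g s * (nunbalanced e s)%:R.
  by rewrite -nunbalancedE mulr_sumr; under [RHS]eq_bigr do rewrite mulr1.
have [->|n_gt0] := posnP (nunbalanced e s); first by rewrite mulr0 mulr_ge0.
by rewrite mulrAC divfK // pnatr_eq0 -lt0n.
Qed.

Lemma sum_le_flip_comparison (v0 : T) :
  \sum_s f (mono e s) <= 2 * K * (D.+3)%:R * \sum_s g s.
Proof.
(* [flip _ v0] maps configurations without unbalanced vertex injectively to
   configurations with one, and preserves [mono] on them. *)
have unbalanced_half :
    \sum_s f (mono e s) <= 2 * \sum_(s | (0 < nunbalanced e s)%N) f (mono e s).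
  rewrite (bigID (fun s => (0 < nunbalanced e s)%N)) /= mulr2n mulrDl mul1r lerD2l.
  rewrite [X in _ <= X](reindex_inj (inv_inj (flipK v0))) /=.
  rewrite [X in X <= _]big_mkcond [X in _ <= X]big_mkcond.
  apply: ler_sum => s _; case: posnP => [s0|_] /=; last by case: ifP.
  by rewrite (nunbalanced_flip_gt0 e_sym e_irr v0 e_reg) // mono_flip_balanced ?nunbalanced_eq0.
have averaged : \sum_(s | (0 < nunbalanced e s)%N) f (mono e s) <=
    \sum_s (K * g s + K * flip_average s).
  rewrite big_mkcond; apply: ler_sum => s _; case: ifP => [/f_le_flip_average //|_].
  by rewrite addr_ge0 // mulr_ge0 ?flip_average_ge0.
apply: (le_trans unbalanced_half); rewrite -!mulrA ler_pM2l //.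
apply: (le_trans averaged); rewrite big_split -!mulr_sumr /= -mulrDr ler_wpM2l //.
by rewrite mulrSr mulrDl mul1r addrC lerD2r sum_flip_average_le.
Qed.

End FlipAveraging.

Section FlipPair.
Variables (R : realFieldType) (r w q : R) (a D : nat).
Hypotheses (r_gt0 : 0 < r) (r_lt1 : r < 1) (w_gt0 : 0 < w).

Definition flip_const := (2 / (1 - r)) ^+ a * (1 + w + w^-1) ^+ D.

Lemma flip_const_ge0 : 0 <= flip_const.
Proof.
have r1_gt0 : 0 < 1 - r by rewrite subr_gt0.
by apply: mulr_ge0; apply: exprn_ge0; [rewrite divr_ge0 ?ltW | rewrite !addr_ge0 ?invr_ge0 ?ltW].
Qed.

Lemma expr_le_near m m' : (m <= m' + D)%N -> (m' <= m + D)%N ->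
  w ^+ m <= (1 + w + w^-1) ^+ D * w ^+ m'.
Proof.
move=> m_le m'_le; set c := 1 + w + w^-1; have wV_ge0 : 0 <= w^-1 by rewrite invr_ge0 ltW.
have c_ge1 : 1 <= c by rewrite /c -addrA lerDl addr_ge0 // ltW.
have w_le_c : w <= c by rewrite /c -addrA addrCA lerDl addr_ge0.
have wV_le_c : w^-1 <= c by rewrite /c lerDr addr_ge0 // ltW.
have le_cD y d : 0 <= y -> y <= c -> (d <= D)%N -> y ^+ d <= c ^+ D.
  move=> y_ge0 y_c d_D; apply: (le_trans (_ : _ <= c ^+ d)); last exact: ler_weXn2l.
  by rewrite lerXn2r ?nnegrE // (le_trans y_ge0).
have [m_m'|/ltnW m'_m] := leqP m m'.
  rewrite -(subnKC m_m') exprD [w ^+ m * _]mulrC mulrA ler_peMl ?exprn_ge0 ?(ltW w_gt0) //.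
  rewrite -(mulVf (expf_neq0 (m' - m) (lt0r_neq0 w_gt0))) ler_wpM2r ?exprn_ge0 ?(ltW w_gt0) //.
  by rewrite -exprVn le_cD //; lia.
rewrite -(subnKC m'_m) exprD mulrC ler_wpM2r ?exprn_ge0 ?(ltW w_gt0) //.
by rewrite le_cD ?(ltW w_gt0) //; lia.
Qed.

Lemma expr_gap n k : (n < k)%N -> (1 - r) * r ^+ n <= r ^+ n - r ^+ k.
Proof.
move=> n_k; have : r ^+ k <= r * r ^+ n by rewrite -exprS ler_wiXn2l ?ltW.
by rewrite mulrBl mul1r; lra.
Qed.

Lemma norm_expr_sub_ge m m' : m != m' -> (1 - r) * r ^+ m <= `|r ^+ m - r ^+ m'|.
Proof.
have rm_ge0 k : 0 <= (1 - r) * r ^+ k.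
  by rewrite mulr_ge0 ?exprn_ge0 ?subr_ge0 ?(ltW r_gt0) ?(ltW r_lt1).
case: ltngtP => // [m_m'|m'_m] _.
  by rewrite ger0_norm ?expr_gap // (le_trans (rm_ge0 m)) ?expr_gap.
rewrite distrC ger0_norm ?(le_trans (rm_ge0 m')) ?expr_gap //.
rewrite (le_trans _ (expr_gap m'_m)) // ler_wpM2l ?subr_ge0 ?(ltW r_lt1) //.
by rewrite ler_wiXn2l ?(ltW r_gt0) ?(ltW r_lt1) // ltnW.
Qed.

Lemma half_norm_sub_pow_le x y :
  (`|x - y| / 2) ^+ a <= `|x - q| ^+ a + `|y - q| ^+ a.
Proof.
have xy_le : `|x - y| <= `|x - q| + `|y - q|.
  by rewrite (_ : x - y = (x - q) - (y - q)) ?ler_normB //; ring.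
have pow_le z : 0 <= z -> `|x - y| / 2 <= z -> (`|x - y| / 2) ^+ a <= z ^+ a.
  by move=> z_ge0 xy_z; rewrite lerXn2r ?nnegrE ?divr_ge0.
have [xq_yq|/ltW yq_xq] := lerP `|x - q| `|y - q|.
  by rewrite (@le_trans _ _ (`|y - q| ^+ a)) ?lerDr ?exprn_ge0 // pow_le //; lra.
by rewrite (@le_trans _ _ (`|x - q| ^+ a)) ?lerDl ?exprn_ge0 // pow_le //; lra.
Qed.

Lemma flip_pair_le m m' : m != m' -> (m <= m' + D)%N -> (m' <= m + D)%N ->
  w ^+ m * (r ^+ m) ^+ a <=
  flip_const * (w ^+ m * `|r ^+ m - q| ^+ a + w ^+ m' * `|r ^+ m' - q| ^+ a).
Proof.
move=> m_m' m_le m'_le; set A := `|r ^+ m - q| ^+ a; set B := `|r ^+ m' - q| ^+ a.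
set M := (1 + w + w^-1) ^+ D; set L := (2 / (1 - r)) ^+ a.
have r1_gt0 : 0 < 1 - r by rewrite subr_gt0.
have L_ge0 : 0 <= L by rewrite exprn_ge0 ?divr_ge0 ?ltW.
have M_ge1 : 1 <= M by rewrite exprn_ege1 // -addrA lerDl addr_ge0 ?invr_ge0 ?ltW.
have wm_ge0 k : 0 <= w ^+ k by rewrite exprn_ge0 ?ltW.
have gap : r ^+ m <= 2 / (1 - r) * (`|r ^+ m - r ^+ m'| / 2).
  have -> : 2 / (1 - r) * (`|r ^+ m - r ^+ m'| / 2) = `|r ^+ m - r ^+ m'| / (1 - r).
    by field; rewrite gt_eqF.
  by rewrite ler_pdivlMr // mulrC norm_expr_sub_ge.
have pow_gap : (r ^+ m) ^+ a <= L * (A + B).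
  apply: (le_trans _ (ler_wpM2l L_ge0 (half_norm_sub_pow_le (r ^+ m) (r ^+ m')))).
  rewrite /L -exprMn lerXn2r ?nnegrE ?exprn_ge0 ?(ltW r_gt0) //.
  by rewrite mulr_ge0 ?divr_ge0 ?(ltW r1_gt0).
rewrite (le_trans (ler_wpM2l (wm_ge0 m) pow_gap)) // /flip_const -/L -/M.
rewrite mulrCA -mulrA ler_wpM2l // !mulrDr lerD //.
  by rewrite ler_peMl // mulr_ge0 ?wm_ge0 ?exprn_ge0.
by rewrite mulrA ler_wpM2r ?exprn_ge0 ?expr_le_near.
Qed.

End FlipPair.

Lemma sum_pow_le_sum_dev_pow (R : realFieldType) (T : finType) (e : rel T) (D a : nat)
    (r w q : R) (v0 : T) :
  symmetric e -> irreflexive e -> regular e D -> (0 < D)%N ->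
  0 < r -> r < 1 -> 0 < w ->
  \sum_s w ^+ mono e s * (r ^+ mono e s) ^+ a <=
  2 * flip_const r w a D * (D.+3)%:R * \sum_s w ^+ mono e s * `|r ^+ mono e s - q| ^+ a.
Proof.
move=> e_sym e_irr e_reg D_gt0 r_gt0 r_lt1 w_gt0.
apply: (sum_le_flip_comparison e_sym e_irr e_reg D_gt0 (flip_const_ge0 a D r_lt1 w_gt0)
  (f := fun k => w ^+ k * (r ^+ k) ^+ a) (g := fun s => w ^+ mono e s * `|r ^+ mono e s - q| ^+ a))
  => // [k|s|s v unb_v]; rewrite ?mulr_ge0 ?exprn_ge0 ?(ltW r_gt0) ?(ltW w_gt0) //.
have [m_neq m_le m'_le] := mono_flip_unbalanced e_sym e_irr e_reg unb_v.
by rewrite flip_pair_le // eq_sym.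
Qed.

Section PowerMean.
Variables (R : realFieldType) (I : finType) (w x : I -> R).
Hypotheses (w_ge0 : forall i, 0 <= w i) (x_ge0 : forall i, 0 <= x i).

Lemma chebyshev_sum_pow k :
  (\sum_i w i * x i ^+ k) * (\sum_i w i * x i) <= (\sum_i w i) * \sum_i w i * x i ^+ k.+1.
Proof.
set lhs := _ * _; set rhs := _ * _.
have lhsE : lhs = \sum_i \sum_j w i * w j * (x i ^+ k * x j).
  by rewrite /lhs mulr_suml; apply: eq_bigr => i _; rewrite mulr_sumr;
     apply: eq_bigr => j _; ring.
have lhsE' : lhs = \sum_i \sum_j w i * w j * (x j ^+ k * x i).
  by rewrite lhsE exchange_big; apply: eq_bigr => i _; apply: eq_bigr => j _; ring.
have rhsE : rhs = \sum_i \sum_j w i * w j * x j ^+ k.+1.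
  by rewrite /rhs mulr_suml; apply: eq_bigr => i _; rewrite mulr_sumr;
     apply: eq_bigr => j _; ring.
have rhsE' : rhs = \sum_i \sum_j w i * w j * x i ^+ k.+1.
  by rewrite rhsE exchange_big; apply: eq_bigr => i _; apply: eq_bigr => j _; ring.
suff : lhs + lhs <= rhs + rhs by lra.
rewrite {1}lhsE lhsE' {1}rhsE rhsE' -!big_split /=; apply: ler_sum => i _.
rewrite -!big_split /=; apply: ler_sum => j _; rewrite -!mulrDr ler_wpM2l ?mulr_ge0 //.
have pow_le y z : 0 <= y -> y <= z -> y ^+ k <= z ^+ k.
  by move=> y_ge0 y_z; rewrite lerXn2r ?nnegrE // (le_trans y_ge0).
have : 0 <= (x i ^+ k - x j ^+ k) * (x i - x j).
  have [x_ij|/ltW x_ji] := lerP (x i) (x j).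
    by rewrite mulr_le0 // subr_le0 // pow_le.
  by rewrite mulr_ge0 // subr_ge0 // pow_le.
by rewrite !exprSr; nra.
Qed.

Lemma jensen_sum_pow n :
  (\sum_i w i * x i) ^+ n.+1 <= (\sum_i w i) ^+ n * \sum_i w i * x i ^+ n.+1.
Proof.
elim: n => [|n IH]; first by rewrite expr0 mul1r expr1.
have wx_ge0 : 0 <= \sum_i w i * x i by rewrite sumr_ge0 // => i _; rewrite mulr_ge0.
rewrite exprS mulrC; apply: (le_trans (ler_wpM2r wx_ge0 IH)).
rewrite exprSr -!mulrA ler_wpM2l ?chebyshev_sum_pow //.
by rewrite exprn_ge0 ?sumr_ge0.
Qed.

Lemma mean_pow_le n :
  ((\sum_i w i * x i) / \sum_i w i) ^+ n.+1 * \sum_i w i <= \sum_i w i * x i ^+ n.+1.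
Proof.
have [W0|W_neq0] := eqVneq (\sum_i w i) 0.
  by rewrite W0 mulr0 sumr_ge0 // => i _; rewrite mulr_ge0 ?exprn_ge0.
have W_gt0 : 0 < \sum_i w i by rewrite lt_def W_neq0 sumr_ge0.
rewrite expr_div_n [(\sum_i w i) ^+ _]exprSr invfM mulrA mulfVK //.
rewrite ler_pdivrMr ?exprn_gt0 //.
by rewrite mulrC jensen_sum_pow.
Qed.

Lemma norm_sub_pow_le (y q : R) n : 0 <= y -> 0 <= q -> `|y - q| ^+ n <= y ^+ n + q ^+ n.
Proof.
move=> y_ge0 q_ge0; have [y_q|q_y] := lerP y q.
  rewrite (@le_trans _ _ (q ^+ n)) ?lerDr ?exprn_ge0 // lerXn2r ?nnegrE; lra.
rewrite (@le_trans _ _ (y ^+ n)) ?lerDl ?exprn_ge0 // lerXn2r ?nnegrE; lra.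
Qed.

Lemma sum_norm_sub_mean_le n (q := (\sum_i w i * x i) / \sum_i w i) :
  \sum_i w i * `|x i - q| ^+ n.+1 <= 2 * \sum_i w i * x i ^+ n.+1.
Proof.
have q_ge0 : 0 <= q by rewrite divr_ge0 ?sumr_ge0 // => i _; rewrite mulr_ge0.
apply: (@le_trans _ _ (\sum_i w i * x i ^+ n.+1 + q ^+ n.+1 * \sum_i w i)).
  rewrite mulr_sumr -big_split; apply: ler_sum => i _ /=.
  by rewrite [q ^+ _ * _]mulrC -mulrDr ler_wpM2l ?norm_sub_pow_le.
by rewrite mulr2n mulrDl mul1r lerD2l mean_pow_le.
Qed.

End PowerMean.

Lemma Zpart_gt0 (R : realFieldType) (T : finType) (e : rel T) (g : R) :
  0 < g -> 0 < Zpart e g.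
Proof.
move=> g_gt0; rewrite /Zpart (bigD1 [ffun=> true]) //= ltr_pwDl ?exprn_gt0 //.
by rewrite sumr_ge0 // => s _; rewrite exprn_ge0 ?ltW.
Qed.

Lemma chi_div_gibbs (R : realFieldType) (T : finType) (e : rel T) (bnu bmu : R) n :
  0 < bnu -> 0 < bmu ->
  chi_div n.+1 (gibbs e bnu) (gibbs e bmu) * (Zpart e bnu ^+ n.+1 / Zpart e bmu ^+ n) =
  2^-1 * \sum_s bmu ^+ mono e s *
    `|(bnu / bmu) ^+ mono e s - Zpart e bnu / Zpart e bmu| ^+ n.+1.
Proof.
move=> bnu_gt0 bmu_gt0; set Znu := Zpart e bnu; set Zmu := Zpart e bmu.
have Znu_gt0 : 0 < Znu by apply: Zpart_gt0.
have Zmu_gt0 : 0 < Zmu by apply: Zpart_gt0.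
have q_gt0 : 0 < Znu / Zmu by rewrite divr_gt0.
rewrite /chi_div mulr_suml mulr_sumr; apply: eq_bigr => s _; rewrite /gibbs -/Znu -/Zmu.
set P := bmu ^+ mono e s; have P_gt0 : 0 < P by rewrite exprn_gt0.
have -> : bnu ^+ mono e s = (bnu / bmu) ^+ mono e s * P.
  by rewrite expr_div_n divfK // expf_neq0 // lt0r_neq0.
set x := (bnu / bmu) ^+ _.
have -> : x * P / Znu / (P / Zmu) - 1 = (x - Znu / Zmu) / (Znu / Zmu).
  by field; rewrite !lt0r_neq0.
rewrite normrM exprMn normfV exprVn (gtr0_norm q_gt0) expr_div_n.
rewrite [Zmu ^+ n.+1]exprS; set A := `|_| ^+ _; clearbody A P.
by field; rewrite !expf_neq0 ?lt0r_neq0.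
Qed.

Lemma chi_div_Zpart_bounds (R : realFieldType) (T : finType) (e : rel T) (D n : nat)
    (bnu bmu : R) (v0 : T) :
  symmetric e -> irreflexive e -> regular e D -> (0 < D)%N -> 0 < bnu -> bnu < bmu ->
  let r := bnu / bmu in
  let b := r ^+ n.+1 * bmu in
  let X := chi_div n.+1 (gibbs e bnu) (gibbs e bmu) *
           (Zpart e bnu ^+ n.+1 / Zpart e bmu ^+ n) in
  [/\ 0 <= X, X <= Zpart e b & Zpart e b <= 4 * flip_const r bmu n.+1 D * (D.+3)%:R * X].
Proof.
move=> e_sym e_irr e_reg D_gt0 bnu_gt0 bnu_lt_bmu r b X.
have bmu_gt0 : 0 < bmu := lt_trans bnu_gt0 bnu_lt_bmu.
have r_gt0 : 0 < r by rewrite divr_gt0.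
have r_lt1 : r < 1 by rewrite ltr_pdivrMr // mul1r.
set w := fun s => bmu ^+ mono e s; set x := fun s => r ^+ mono e s.
set q := Zpart e bnu / Zpart e bmu.
have Znu_wx : Zpart e bnu = \sum_s w s * x s.
  by apply: eq_bigr => s _; rewrite -exprMn mulrC divfK ?lt0r_neq0.
have Zb_wx : Zpart e b = \sum_s w s * x s ^+ n.+1.
  by apply: eq_bigr => s _; rewrite exprMn exprAC mulrC.
have X_dev : X = 2^-1 * \sum_s w s * `|x s - q| ^+ n.+1 by rewrite /X chi_div_gibbs.
have dev_le : \sum_s w s * `|x s - q| ^+ n.+1 <= 2 * \sum_s w s * x s ^+ n.+1.
  rewrite /q Znu_wx; apply: sum_norm_sub_mean_le => s; exact: exprn_ge0 (ltW _).
split.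
- rewrite X_dev mulr_ge0 ?invr_ge0 // sumr_ge0 // => s _.
  by rewrite mulr_ge0 // exprn_ge0 // ltW.
- by rewrite X_dev Zb_wx; lra.
have := sum_pow_le_sum_dev_pow n.+1 q v0 e_sym e_irr e_reg D_gt0 r_gt0 r_lt1 bmu_gt0.
by rewrite X_dev Zb_wx; lra.
Qed.

Unset Implicit Arguments. Set Strict Implicit.

Theorem lemma7p2 (R : realType) (a D : nat) (bnu bmu : R) :
  (2 <= a)%N -> (3 <= D)%N ->
  bnu < bmu ->
  (D%:R - 2) / D%:R <= bnu ->
  (bnu / bmu) ^+ a * bmu < (D%:R - 2) / D%:R ->
  exists C : R, 0 < C /\
    forall (T : finType) (e : rel T),
      (0 < #|T|)%N -> simple_graph e -> regular e D ->
      let b := (bnu / bmu) ^+ a * bmu in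
      let X := chi_div a (gibbs e bnu) (gibbs e bmu)
               * (Zpart e bnu ^+ a / Zpart e bmu ^+ (a - 1)) in
      C^-1 * Zpart e b <= X /\ X <= C * Zpart e b.
Proof.
case: a => // n _ D_ge3 bnu_lt_bmu bnu_ge _; rewrite subn1 succnK.
have bnu_gt0 : 0 < bnu.
  have D_gt2 : 2 < D%:R :> R by rewrite ltr_nat.
  by apply: lt_le_trans bnu_ge; rewrite divr_gt0 ?subr_gt0 //; lra.
have bmu_gt0 : 0 < bmu := lt_trans bnu_gt0 bnu_lt_bmu.
have r_lt1 : bnu / bmu < 1 by rewrite ltr_pdivrMr // mul1r.
set c := 4 * flip_const (bnu / bmu) bmu n.+1 D * (D.+3)%:R.
have c_ge0 : 0 <= c by rewrite mulr_ge0 ?ler0n // mulr_ge0 // flip_const_ge0.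
exists (1 + c); split; first lra.
move=> T e /card_gt0P [v0 _] [e_sym e_irr] e_reg b X.
have D_gt0 : (0 < D)%N by apply: leq_trans D_ge3.
have [X_ge0 X_le Zb_le] :=
  chi_div_Zpart_bounds n v0 e_sym e_irr e_reg D_gt0 bnu_gt0 bnu_lt_bmu.
rewrite -/b -/X -/c in X_ge0 X_le Zb_le.
split; first by rewrite ler_pdivrMl; nra.
by rewrite (le_trans X_le) // ler_peMl; nra.
Qed.
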